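(* Let $q \ge 2$ be a fixed integer and let $\Sigma$ be an alphabet with $|\Sigma| = q$. There exist constants $c > 0$ and $n_0$ (which may depend on $q$) such that for every integer $n \ge n_0$, the number of privileged words of length $n$ over $\Sigma$ is at least \[ \frac{c\, q^n}{n (\log_q n)^2}. \]
   Context: A border of a word $w$ is a non-empty word that is both a prefix and a suffix of $w$. A word $w$ is privileged if either $|w| \le 1$, or $|w| \ge 2$ and $w$ has a border $u$ which is itself privileged and which occurs exactly twice as a factor (contiguous subword) of $w$ (i.e., only as the prefix and as the suffix, these being two distinct occurrences). The claim is meant for fixed $q$, with the constants allowed to depend on $q$. *)

From mathcomp Require Import all_boot.
From Stdlib Require Import Reals.
Set Implicit Arguments. Unset Strict Implicit. Unset Printing Implicit Defensive.

Section Words.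
Variable T : eqType.

Definition occurrences (u w : seq T) : nat :=
  count (fun i => take (size u) (drop i w) == u)
        (iota 0 (size w - size u).+1).

Definition is_border (u w : seq T) : bool :=
  [&& 0 < size u, prefix u w & suffix u w].

(* Privileged words, by recursion with fuel k (fuel size w suffices, since
   the border u witnessing privilegedness occurs exactly twice, hence u <> w,
   hence |u| < |w|). Borders of w are exactly the take i w, 1 <= i <= |w|,
   that are also suffixes. *)
Fixpoint privb (k : nat) (w : seq T) : bool :=
  if size w <= 1 then true else
  match k with
  | 0 => false
  | k'.+1 =>
      has (fun i => let u := take i w in
                    [&& is_border u w, privb k' u & occurrences u w == 2])
          (iota 1 (size w))
  end.

Definition privileged (w : seq T) : bool := privb (size w) w.

End Words.

Definition num_privileged (T : finType) (n : nat) : nat :=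
  #|[pred t : n.-tuple T | privileged (tval t)]|.

(* Let U = a^k y a^k, where y begins and ends with bb and avoids a^k, and let
   x begin with ba, end with ab and avoid U.  Then a^k occurs in U only as a
   prefix and as a suffix, and U occurs in w = U x U only as a prefix and as a
   suffix, so U and w are privileged.  By a union bound over the positions of a
   forbidden factor, once q^k >= 2 q^4 |y| and q^|U| >= 2 q^4 |x| at least a
   fraction 1/(2 q^4) of all candidates y, resp. x, qualify.  Taking
   |U| ~ log_q n and k ~ log_q |U| gives at least
   q^n / (4 q^8 q^(2k + |U|)) = Omega(q^n / (n (log_q n)^2))
   privileged words of length n. *)

From Stdlib Require Import Reals Lra.
From mathcomp Require Import all_boot zify.
Set Implicit Arguments. Unset Strict Implicit. Unset Printing Implicit Defensive.

(* [all_boot] rebinds the delimiter [%R] to its own ring scope. *)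
Delimit Scope R_scope with R.

Section Words.
Variable T : eqType.
Implicit Types u w x y : seq T.

Lemma privb_mono k k' w : k <= k' -> privb k w -> privb k' w.
Proof.
elim: k k' w => [|k IH] [|k'] w //= lekk'; first by case: ifP.
case: ifP => // _; apply: sub_has => i /and3P [border priv occ].
by rewrite border occ (IH k').
Qed.

Lemma privileged_of_border u w : is_border u w -> privileged u ->
  occurrences u w = 2 -> size u < size w -> privileged w.
Proof.
rewrite /privileged => border privu occu ltuw.
case Ew: (size w) ltuw => [|n] // ltun /=.
case: ifP => // _; apply/hasP; exists (size u).
  by rewrite mem_iota; case/and3P: border; lia.
case/and3P: (border) => _ /prefixP [v defw] _.
have -> : take (size u) w = u by rewrite defw take_size_cat.
rewrite border occu eqxx andbT.
by apply: privb_mono privu; lia.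
Qed.

Lemma nth_neq_default d w i : nth d w i != d -> i < size w.
Proof. by apply: contraR; rewrite -leqNgt => /(nth_default d) ->. Qed.

Definition occurs_at u w t := take (size u) (drop t w) == u.

Lemma occurs_at_fits u w t : 0 < size u -> occurs_at u w t -> t + size u <= size w.
Proof.
move=> posu /eqP/(congr1 size); rewrite size_take_min size_drop; lia.
Qed.

Lemma occurs_atP d u w t : 0 < size u -> reflect (t + size u <= size w /\
   forall j, j < size u -> nth d w (t + j) = nth d u j) (occurs_at u w t).
Proof.
move=> posu; apply: (iffP idP) => [occ | [fits agree]].
  split=> [|j ltju]; first exact: occurs_at_fits occ.
  by rewrite -(eqP occ) nth_take // nth_drop.
have size_factor : size (take (size u) (drop t w)) = size u.
  by rewrite size_take_min size_drop; lia.
apply/eqP/(@eq_from_nth _ d) => // j; rewrite size_factor => ltj.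
by rewrite nth_take // nth_drop agree.
Qed.

Lemma occurrences_at_ends u w :
  occurs_at u w 0 -> occurs_at u w (size w - size u) -> size u < size w ->
  (forall t, 0 < t < size w - size u -> ~~ occurs_at u w t) ->
  occurrences u w = 2.
Proof.
rewrite /occurrences; set N := size w - size u => first last ltuw inner.
have -> : N.+1 = 1 + (N.-1 + 1) by lia.
rewrite !iotaD !count_cat /= [take _ (drop 0 w) == u]first.
have -> : 0 + 1 + N.-1 = N by lia.
rewrite [take _ _ == u]last (@eq_in_count _ _ pred0) ?count_pred0 //.
by move=> t; rewrite mem_iota => ?; apply/negbTE/inner; lia.
Qed.

Lemma occurs_at_catr u s1 s2 t : occurs_at u (s1 ++ s2) (size s1 + t) = occurs_at u s2 t.
Proof. by rewrite /occurs_at drop_cat ltnNge leq_addr /= addKn. Qed.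

Lemma occurs_at_catl u s1 s2 t : t + size u <= size s1 ->
  occurs_at u (s1 ++ s2) t = occurs_at u s1 t.
Proof.
move=> fits; rewrite /occurs_at drop_cat; case: ltnP => [lt_t|ge_t].
  by rewrite takel_cat // size_drop; lia.
have /size0nil -> : size u = 0 by lia.
by rewrite !take0.
Qed.

Definition avoids u w := all (fun t => ~~ occurs_at u w t) (iota 0 (size w)).

Lemma avoids_nth d u w t : 0 < size u -> avoids u w -> t + size u <= size w ->
  ~ (forall j, j < size u -> nth d w (t + j) = nth d u j).
Proof.
move=> posu /allP avoid fits agree.
have /negP[] : ~~ occurs_at u w t by apply: avoid; rewrite mem_iota; lia.
exact/(occurs_atP d _ _ posu).
Qed.

Lemma occurs_at_rev u w t : t + size u <= size w ->
  occurs_at (rev u) (rev w) (size w - (t + size u)) = occurs_at u w t.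
Proof.
move=> fits; rewrite /occurs_at size_rev drop_rev subKn // take_rev.
rewrite size_takel // addnK addnC -take_drop.
by rewrite (can_eq revK).
Qed.

Lemma avoids_rev u w : 0 < size u -> avoids u w -> avoids (rev u) (rev w).
Proof.
move=> posu /allP avoid; apply/allP => t _; apply/negP => occ.
have := occurs_at_fits _ occ; rewrite !size_rev => /(_ posu) fits.
have /negP[] : ~~ occurs_at u w (size w - (t + size u)).
  by apply: avoid; rewrite mem_iota; lia.
rewrite -occurs_at_rev; last by lia.
by rewrite (_ : size w - _ = t) //; lia.
Qed.

Lemma privileged_nseq (a : T) k : privileged (nseq k a).
Proof.
case: k => [|k] //; elim: k => [|k IH] //.
apply: (@privileged_of_border (nseq k.+1 a)); rewrite ?size_nseq //.
  apply/and3P; split; rewrite ?size_nseq //.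
    by rewrite -(addn1 k.+1) nseqD prefix_prefix.
  exact: suffix_cons.
rewrite /occurrences !size_nseq subSnn /= -/(nseq k.+1 a).
by rewrite (@take_nseq _ k k.+1) // take_nseq // eqxx.
Qed.

End Words.

Lemma size_sandwich (T : Type) (u x : seq T) : size (u ++ x ++ u) = 2 * size u + size x.
Proof. by rewrite !size_cat; lia. Qed.

Lemma rev_sandwich (T : Type) (u x : seq T) : rev (u ++ x ++ u) = rev u ++ rev x ++ rev u.
Proof. by rewrite !rev_cat catA. Qed.

Section Bracket.
Variables (T : eqType) (a : T).
Implicit Types x y : seq T.

Definition bracket k y := nseq k a ++ y ++ nseq k a.

Lemma size_bracket k y : size (bracket k y) = 2 * k + size y.
Proof. by rewrite /bracket !size_cat size_nseq; lia. Qed.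

Lemma nth_bracket k y j : nth a (bracket k y) j =
  if k <= j < k + size y then nth a y (j - k) else a.
Proof.
rewrite /bracket nth_cat size_nseq; case: ltnP => [lt_jk|ge_jk].
  by rewrite nth_nseq lt_jk.
rewrite nth_cat nth_nseq /=; case: ltnP => lt_y; first by rewrite ifT //; lia.
by rewrite if_same ifF //; lia.
Qed.

Lemma rev_bracket k y : rev (bracket k y) = bracket k (rev y).
Proof. by rewrite /bracket !rev_cat rev_nseq catA. Qed.

Section PrivilegedBracket.
Variables (k : nat) (y : seq T).
Hypotheses (k_gt0 : 0 < k) (y_first : nth a y 0 != a)
  (y_last : nth a y (size y - 1) != a) (y_avoids : avoids (nseq k a) y).

Lemma nseq_positions_in_bracket t : t + k <= size (bracket k y) ->
  (forall j, j < k -> nth a (bracket k y) (t + j) = a) -> t = 0 \/ t = k + size y.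
Proof.
rewrite size_bracket => fits all_a.
have := nth_neq_default y_first => y_gt0.
case: (ltnP t k) => [lt_tk|ge_tk].
  case: (posnP t) => [|t_gt0]; [by left | exfalso].
  have : nth a y 0 = a.
    have := all_a (k - t) ltac:(lia); rewrite nth_bracket ifT; last by lia.
    by rewrite (_ : t + (k - t) - k = 0) //; lia.
  by move/eqP; rewrite (negbTE y_first).
case: (leqP t (size y)) => [le_ty|gt_ty].
  exfalso; apply: (avoids_nth (d := a) (t := t - k) _ y_avoids); rewrite ?size_nseq //.
    by lia.
  move=> j lt_jk; have -> : t - k + j = t + j - k by lia.
  have := all_a j lt_jk; rewrite nth_nseq lt_jk nth_bracket ifT //; lia.
case: (ltnP t (k + size y)) => [lt_t|]; last by right; lia.
exfalso; have : nth a y (size y - 1) = a.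
  have := all_a (k + size y - 1 - t) ltac:(lia); rewrite nth_bracket ifT; last by lia.
  by rewrite (_ : _ - k = size y - 1) //; lia.
by move/eqP; rewrite (negbTE y_last).
Qed.

Lemma occurrences_nseq_bracket : occurrences (nseq k a) (bracket k y) = 2.
Proof.
have k_pos : 0 < size (nseq k a) by rewrite size_nseq.
apply: occurrences_at_ends => [| | |t]; rewrite ?size_bracket ?size_nseq.
- by rewrite /occurs_at drop0 take_size_cat ?size_nseq.
- rewrite /occurs_at (_ : _ - k = size (nseq k a ++ y)); last by rewrite size_cat size_nseq; lia.
  by rewrite size_nseq /bracket catA drop_size_cat // take_nseq.
- by have := nth_neq_default y_first; lia.
move=> t_range; apply/negP => /(occurs_atP a _ _ k_pos) [fits agree].
rewrite size_nseq size_bracket in fits agree.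
have [] := nseq_positions_in_bracket (t := t); rewrite ?size_bracket //; try lia.
by move=> j lt_jk; rewrite agree // nth_nseq lt_jk.
Qed.

Lemma privileged_bracket : privileged (bracket k y).
Proof.
apply: (privileged_of_border (u := nseq k a)).
- by rewrite /is_border size_nseq k_gt0 /bracket prefix_prefix catA suffix_suffix.
- exact: privileged_nseq.
- exact: occurrences_nseq_bracket.
by rewrite size_nseq size_bracket; have := nth_neq_default y_first; lia.
Qed.

End PrivilegedBracket.

Section LeftOverlap.
Variables (k : nat) (y x : seq T).
Hypotheses (k_gt0 : 0 < k) (y_first : nth a y 0 != a) (y_second : nth a y 1 != a)
  (y_last : nth a y (size y - 1) != a) (y_avoids : avoids (nseq k a) y)
  (x_size : 1 < size x) (x_first : nth a x 0 != a) (x_second : nth a x 1 = a).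

Lemma no_left_overlap p : 0 < p < size (bracket k y) ->
  ~~ occurs_at (bracket k y) (bracket k y ++ x ++ bracket k y) p.
Proof.
set U := bracket k y; have U_size : size U = 2 * k + size y by rewrite size_bracket.
move=> p_range; apply/negP => /(occurs_atP a _ _ _) [|_ agree]; first by lia.
have y_size := nth_neq_default y_second.
have in_U i : i < size U -> nth a (U ++ x ++ U) i = nth a U i by move=> ?; rewrite nth_cat ifT.
have in_x i : i < size x -> nth a (U ++ x ++ U) (size U + i) = nth a x i.
  by move=> ?; rewrite nth_cat ifF ?addKn ?nth_cat ?ifT //; lia.
case: (leqP (p + k) (size U)) => [inside|across].
  have p_eq : p = k + size y.
    have [||] // := nseq_positions_in_bracket k_gt0 y_first y_last y_avoids inside.
      move=> j lt_jk; rewrite -/U -in_U; last by lia.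
      rewrite agree; last by lia.
      by rewrite nth_bracket ifF //; lia.
    by lia.
  have := agree (k + 1) ltac:(lia).
  rewrite (_ : p + (k + 1) = size U + 1); last by lia.
  rewrite in_x // x_second nth_bracket ifT; last by lia.
  rewrite (_ : k + 1 - k = 1); last by lia.
  by move/eqP; rewrite eq_sym (negbTE y_second).
have := agree (size U - p) ltac:(lia).
rewrite (_ : p + (size U - p) = size U + 0); last by lia.
rewrite in_x; last by lia.
rewrite nth_bracket ifF; last by lia.
by move/eqP; rewrite (negbTE x_first).
Qed.

End LeftOverlap.

Section Sandwich.
Variables (k : nat) (y x : seq T).
Hypotheses (k_gt0 : 0 < k) (y_first : nth a y 0 != a) (y_second : nth a y 1 != a)
  (y_penult : nth a y (size y - 2) != a) (y_last : nth a y (size y - 1) != a)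
  (y_avoids : avoids (nseq k a) y).
Hypotheses (x_size : 1 < size x) (x_first : nth a x 0 != a) (x_second : nth a x 1 = a)
  (x_penult : nth a x (size x - 2) = a) (x_last : nth a x (size x - 1) != a)
  (x_avoids : avoids (bracket k y) x).

Local Notation U := (bracket k y).
Local Notation w := (U ++ x ++ U).

Lemma no_right_overlap p : size x < p < size U + size x -> ~~ occurs_at U w p.
Proof.
move=> p_range; have y_size := nth_neq_default y_second.
rewrite -occurs_at_rev; last by rewrite size_sandwich; lia.
rewrite rev_sandwich rev_bracket.
apply: no_left_overlap; rewrite ?size_rev ?nth_rev //; try lia.
- by rewrite (_ : size y - _ = 0) //; lia.
- by rewrite -(rev_nseq k a); apply: avoids_rev; rewrite ?size_nseq.
- move: p_range; rewrite size_sandwich !size_bracket size_rev; lia.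
Qed.

Lemma no_inner_occurrence p : size U <= p <= size x -> ~~ occurs_at U w p.
Proof.
move=> /andP [ge_p le_p]; rewrite -(subnKC ge_p) occurs_at_catr occurs_at_catl; last by lia.
by apply: (allP x_avoids); rewrite mem_iota size_bracket in ge_p *; lia.
Qed.

Lemma occurrences_sandwich : occurrences U w = 2.
Proof.
have y_size := nth_neq_default y_second.
have U_size : size U = 2 * k + size y by rewrite size_bracket.
apply: occurrences_at_ends => [| | |t t_range].
- by rewrite /occurs_at drop0 take_size_cat.
- rewrite size_sandwich (_ : _ - _ = size U + (size x + 0)); last by lia.
  by rewrite !occurs_at_catr /occurs_at drop0 take_size.
- by rewrite size_sandwich; lia.
rewrite size_sandwich in t_range.
case: (ltnP t (size U)) => [lt_t|ge_t].
  by apply: no_left_overlap => //; lia.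
case: (leqP t (size x)) => [le_t|gt_t].
  by apply: no_inner_occurrence; lia.
by apply: no_right_overlap; lia.
Qed.

Lemma privileged_sandwich : privileged w.
Proof.
have y_size := nth_neq_default y_second.
apply: (privileged_of_border (u := U)).
- rewrite /is_border prefix_prefix catA suffix_suffix !andbT.
  by rewrite size_bracket; lia.
- exact: privileged_bracket.
- exact: occurrences_sandwich.
by rewrite size_sandwich size_bracket; lia.
Qed.

End Sandwich.
End Bracket.

Section Counting.
Variables (T : finType) (a : T).
Local Notation q := #|T|.

Lemma card_occurs_at (p : seq T) L t : 0 < size p ->
  #|[set w : L.-tuple T | occurs_at p w t]| <= q ^ (L - size p).
Proof.
move=> p_pos.
case: (leqP (t + size p) L) => [fits|]; last first.
  move=> overflow; rewrite (_ : [set w | _] = set0) ?cards0 //.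
  apply/setP => w; rewrite !inE; apply/negP => /(occurs_at_fits p_pos).
  by rewrite size_tuple => /leq_ltn_trans/(_ overflow); rewrite ltnn.
pose rest (w : L.-tuple T) := take t w ++ drop (t + size p) w.
have size_rest w : size (rest w) = L - size p.
  by rewrite size_cat size_take size_drop size_tuple; case: ifP; lia.
pose code w := [ffun j : 'I_(L - size p) => nth a (rest w) j].
rewrite -(card_in_imset (f := code)); last first.
  move=> w1 w2; rewrite !inE => /eqP occ1 /eqP occ2 /ffunP same_code.
  have same_rest : rest w1 = rest w2.
    apply: (@eq_from_nth _ a) => [|j]; rewrite !size_rest // => lt_j.
    by have := same_code (Ordinal lt_j); rewrite !ffunE.
  have size_take_t (w : L.-tuple T) : size (take t w) = t.
    by rewrite size_takel // size_tuple; lia.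
  have same_take : take t w1 = take t w2.
    by move: (congr1 (take t) same_rest); rewrite /rest !take_size_cat.
  have same_drop : drop (t + size p) w1 = drop (t + size p) w2.
    by move: (congr1 (drop t) same_rest); rewrite /rest !drop_size_cat.
  apply: val_inj; rewrite /= -(cat_take_drop t w1) -(cat_take_drop t w2) same_take.
  rewrite -(cat_take_drop (size p) (drop t w1)) -(cat_take_drop (size p) (drop t w2)).
  by rewrite occ1 occ2 !drop_drop addnC same_drop.
by apply: leq_trans (max_card _) _; rewrite card_ffun card_ord.
Qed.

Lemma card_has_occurs (p : seq T) L (r : seq nat) : 0 < size p ->
  #|[set w : L.-tuple T | has (occurs_at p w) r]| <= size r * q ^ (L - size p).
Proof.
move=> p_pos; elim: r => [|t r IH].
  by rewrite (_ : [set w | _] = set0) ?cards0 //; apply/setP => w; rewrite !inE.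
rewrite (_ : [set w : L.-tuple T | _] = [set w : L.-tuple T | occurs_at p w t]
  :|: [set w : L.-tuple T | has (occurs_at p w) r]); last by apply/setP => w; rewrite !inE.
apply: leq_trans (leq_card_setU _ _).1 _.
by rewrite mulSn leq_add // card_occurs_at.
Qed.

Lemma card_not_avoids (p : seq T) L : 0 < size p ->
  #|[set w : L.-tuple T | ~~ avoids p w]| <= L * q ^ (L - size p).
Proof.
move=> p_pos; have := card_has_occurs L (iota 0 L) p_pos; rewrite size_iota.
apply: leq_trans; apply/subset_leq_card/subsetP => w.
rewrite !inE /avoids size_tuple -has_predC.
by apply: sub_has => t /=; rewrite negbK.
Qed.

Definition has_ends L c0 c1 c2 c3 (w : seq T) :=
  [&& nth a w 0 == c0, nth a w 1 == c1, nth a w (L - 2) == c2 & nth a w (L - 1) == c3].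

Lemma card_has_ends L c0 c1 c2 c3 : 4 <= L ->
  q ^ (L - 4) <= #|[set w : L.-tuple T | has_ends L c0 c1 c2 c3 w]|.
Proof.
move=> L_ge4; have size_ok : ((L - 4) + 2).+2 = L by lia.
pose frame (z : (L - 4).-tuple T) : L.-tuple T :=
  tcast size_ok [tuple of c0 :: c1 :: (z ++ [:: c2; c3])].
have frame_inj : injective frame.
  move=> z1 z2 /(congr1 val); rewrite /frame /= !val_tcast /= => [[]] /eqP.
  by rewrite eqseq_cat ?size_tuple // => /andP [/eqP /val_inj].
rewrite -card_tuple -cardsT -(card_imset _ frame_inj).
apply/subset_leq_card/subsetP => w /imsetP [z _ ->].
rewrite inE /has_ends /frame !val_tcast /= !eqxx /=.
have -> : L - 2 = (L - 4).+2 by lia.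
have -> : L - 1 = (L - 4).+3 by lia.
by rewrite /= !nth_cat size_tuple ltnn subnn ltnNge leqnSn /= subSnn /= !eqxx.
Qed.

Lemma card_has_ends_avoids (p : seq T) L c0 c1 c2 c3 :
  0 < size p -> 4 <= L -> size p <= L -> 2 * q ^ 4 * L <= q ^ size p ->
  q ^ L <= 2 * q ^ 4 * #|[set w : L.-tuple T | has_ends L c0 c1 c2 c3 w && avoids p w]|.
Proof.
move=> p_pos L_ge4 p_le_L few_bad.
set good := #|_|.
have good_or_bad : q ^ (L - 4) <= good + L * q ^ (L - size p).
  apply: leq_trans (card_has_ends c0 c1 c2 c3 L_ge4) _.
  apply: leq_trans (leq_add (leqnn _) (card_not_avoids L p_pos)).
  apply: leq_trans (leq_card_setU _ _).1; apply/subset_leq_card/subsetP => w.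
  by rewrite !inE => ->; case: avoids.
have split4 : q ^ L = q ^ 4 * q ^ (L - 4) by rewrite -expnD subnKC.
have splitp : q ^ L = q ^ size p * q ^ (L - size p) by rewrite -expnD subnKC.
have := leq_mul (leqnn (2 * q ^ 4)) good_or_bad.
have := leq_mul few_bad (leqnn (q ^ (L - size p))).
nia.
Qed.

End Counting.

Section PrivilegedSandwiches.
Variables (T : finType) (a b : T) (k s m : nat).
Local Notation q := #|T|.
Local Notation n := (2 * (2 * k + s) + m).

Definition cores := [set y : s.-tuple T | has_ends a s b b b b y && avoids (nseq k a) y].

Definition spacers (y : seq T) :=
  [set x : m.-tuple T | has_ends a m b a a b x && avoids (bracket a k y) x].

Lemma size_sandwich_word : k + (s + k) + (m + (k + (s + k))) = n.
Proof. lia. Qed.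

Definition sandwich_word (yx : s.-tuple T * m.-tuple T) : n.-tuple T :=
  tcast size_sandwich_word [tuple of bracket a k yx.1 ++ yx.2 ++ bracket a k yx.1].

Lemma sandwich_wordE yx :
  tval (sandwich_word yx) = bracket a k yx.1 ++ yx.2 ++ bracket a k yx.1.
Proof. by rewrite /sandwich_word val_tcast. Qed.

Lemma sandwich_word_inj : injective sandwich_word.
Proof.
move=> [y1 x1] [y2 x2] /(congr1 (@tval n T)); rewrite !sandwich_wordE /= => same.
have same_y : tval y1 = tval y2.
  have := congr1 (fun w => take s (drop k w)) same; rewrite /bracket /= -!catA.
  by rewrite !drop_size_cat ?size_nseq // !take_size_cat ?size_tuple.
have same_x : tval x1 = tval x2.
  have := congr1 (fun w => take m (drop (2 * k + s) w)) same.
  by rewrite !drop_size_cat ?size_bracket ?size_tuple // !take_size_cat ?size_tuple.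
by congr (_, _); apply: val_inj.
Qed.

Hypothesis a_neq_b : a != b.
Hypotheses (k_gt0 : 0 < k) (s_ge4 : 4 <= s) (m_ge4 : 4 <= m) (k_le_s : k <= s)
  (core_le_m : 2 * k + s <= m) (few_bad_cores : 2 * q ^ 4 * s <= q ^ k)
  (few_bad_spacers : 2 * q ^ 4 * m <= q ^ (2 * k + s)).

Lemma card_cores : q ^ s <= 2 * q ^ 4 * #|cores|.
Proof using k_gt0 s_ge4 k_le_s few_bad_cores.
by apply: card_has_ends_avoids; rewrite ?size_nseq.
Qed.

Lemma card_spacers (y : s.-tuple T) : q ^ m <= 2 * q ^ 4 * #|spacers y|.
Proof using k_gt0 m_ge4 core_le_m few_bad_spacers.
by apply: card_has_ends_avoids; rewrite ?size_bracket ?size_tuple // addn_gt0 muln_gt0 k_gt0.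
Qed.

Lemma sandwich_word_privileged y x : y \in cores -> x \in spacers y ->
  privileged (sandwich_word (y, x)).
Proof using a_neq_b k_gt0 m_ge4.
rewrite !inE /has_ends => /andP [/and4P [/eqP y0 /eqP y1 /eqP y2 /eqP y3] y_avoids].
move=> /andP [/and4P [/eqP x0 /eqP x1 /eqP x2 /eqP x3] x_avoids].
have b_neq_a : b != a by rewrite eq_sym.
rewrite sandwich_wordE.
apply: privileged_sandwich; rewrite ?size_tuple ?y0 ?y1 ?y2 ?y3 ?x0 ?x1 ?x2 ?x3 //.
exact: leq_trans m_ge4.
Qed.

Lemma count_privileged_sandwiches : q ^ s * q ^ m <= 4 * q ^ 8 * num_privileged T n.
Proof.
pose pairs := [set yx : s.-tuple T * m.-tuple T | (yx.1 \in cores) && (yx.2 \in spacers yx.1)].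
have card_pairs : #|pairs| = \sum_(y in cores) #|spacers y|.
  rewrite -sum1_card; under [RHS]eq_bigr do rewrite -sum1_card.
  by rewrite pair_big_dep; apply: eq_bigl => [[y x]]; rewrite inE.
have pairs_privileged : #|pairs| <= num_privileged T n.
  rewrite -(card_imset _ sandwich_word_inj); apply/subset_leq_card/subsetP => w.
  case/imsetP => [[y x]]; rewrite inE /= => /andP [y_core x_spacer] ->.
  exact: sandwich_word_privileged.
have many_pairs : q ^ s * q ^ m <= 4 * q ^ 8 * #|pairs|.
  have : \sum_(y in cores) q ^ m <= \sum_(y in cores) 2 * q ^ 4 * #|spacers y|.
    by apply: leq_sum => y _; apply: card_spacers.
  rewrite sum_nat_const -big_distrr -card_pairs /= => spacers_bound.
  have := leq_mul card_cores (leqnn (q ^ m)).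
  have := leq_mul (leqnn (2 * q ^ 4)) spacers_bound.
  have -> : q ^ 8 = q ^ 4 * q ^ 4 by rewrite -expnD.
  move: (q ^ 4) (q ^ s) (q ^ m) #|cores| #|pairs| => Q S M C P; nia.
by apply: leq_trans many_pairs _; rewrite leq_mul2l pairs_privileged orbT.
Qed.

End PrivilegedSandwiches.

Lemma mul_lt_exp2 c j : 4 * c + 5 <= j -> c * j < 2 ^ j.-1.
Proof.
have base : c * (4 * c + 5) < 2 ^ (4 * c + 4).
  elim: c => [|c IH] //; have -> : 4 * c.+1 + 4 = (4 * c + 4) + 4 by lia.
  by rewrite expnD; move: IH; move: (2 ^ (4 * c + 4)) => X; nia.
move=> le_j; rewrite -(subnKC le_j); elim: (j - _) => [|d IH].
  by rewrite addn0 (_ : _.-1 = 4 * c + 4) //; lia.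
rewrite (_ : (4 * c + 5 + d.+1).-1 = (4 * c + 5 + d).-1.+1) ?expnS; last by lia.
by move: IH; move: (2 ^ _) => X; nia.
Qed.

Lemma mul_lt_exp q c j : 1 < q -> 4 * c + 5 <= j -> c * j < q ^ j.-1.
Proof.
move=> q_gt1 le_j; apply: leq_trans (mul_lt_exp2 le_j) _.
by elim: j.-1 => // e IH; rewrite !expnS leq_mul.
Qed.

Lemma expn_up_log_le q X : 1 < q -> 1 < X -> q ^ up_log q X <= q * X.
Proof.
move=> q_gt1 X_gt1; have e_gt0 : 0 < up_log q X by rewrite up_log_gt0 q_gt1.
by rewrite -(prednK e_gt0) expnS leq_mul2l ltnW ?up_log_gtn ?orbT.
Qed.

Lemma up_log_mul_le q c l : 1 < q -> 0 < c -> 72 * c + 19 <= l ->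
  3 * up_log q (c * l) + 4 <= l.
Proof.
move=> q_gt1 c_gt0 l_big; set e := up_log q (c * l).
have cl_gt1 : 1 < c * l by nia.
have small := up_log_gtn q_gt1 cl_gt1; rewrite -/e in small.
case: (leqP (3 * e + 4) l) => // e_big; exfalso.
have e_ge : 4 * (6 * c) + 5 <= e by lia.
have := mul_lt_exp q_gt1 e_ge.
by move: (q ^ e.-1) small => Y; nia.
Qed.

Lemma exp_le_num_privileged_params (T : finType) k l n : 1 < #|T| -> 0 < k ->
  3 * k + 4 <= l -> 3 * l + 4 <= n ->
  2 * #|T| ^ 4 * l <= #|T| ^ k <= #|T| * (2 * #|T| ^ 4 * l) ->
  2 * #|T| ^ 4 * n <= #|T| ^ l <= #|T| * (2 * #|T| ^ 4 * n) ->
  #|T| ^ n <= 32 * #|T| ^ 23 * (l * l) * n * num_privileged T n.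
Proof.
set q := #|T| => q_gt1 k_gt0 k_small l_small /andP [k_lb k_ub] /andP [l_lb l_ub].
have [a [b [_ _ a_neq_b]]] := card_gt1P q_gt1.
have e_l : 2 * k + (l - 2 * k) = l by lia.
have e_n : 2 * l + (n - 2 * l) = n by lia.
have few_bad_cores : 2 * q ^ 4 * (l - 2 * k) <= q ^ k.
  by apply: leq_trans k_lb; rewrite leq_mul2l leq_subr orbT.
have few_bad_spacers : 2 * q ^ 4 * (n - 2 * l) <= q ^ (2 * k + (l - 2 * k)).
  by rewrite e_l; apply: leq_trans l_lb; rewrite leq_mul2l leq_subr orbT.
have := @count_privileged_sandwiches T a b k (l - 2 * k) (n - 2 * l) a_neq_b k_gt0
  ltac:(lia) ltac:(lia) ltac:(lia) ltac:(lia) few_bad_cores few_bad_spacers.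
rewrite e_l e_n => count.
have split_n : q ^ n = q ^ (l - 2 * k) * q ^ (n - 2 * l) * (q ^ k * q ^ k) * q ^ l.
  by rewrite -!expnD; congr (q ^ _); lia.
rewrite split_n; apply: leq_trans (leq_mul (leq_mul count (leq_mul k_ub k_ub)) l_ub) _.
have -> : q ^ 23 = q ^ 8 * q ^ 5 * q ^ 5 * q ^ 5 by rewrite -!expnD.
have -> : q ^ 5 = q * q ^ 4 by rewrite -expnS.
move: (q ^ 8) (q ^ 4) (num_privileged T n) => Q8 Q4 P.
lia.
Qed.

(* [144 q^4 + 19 = 72 (2 q^4) + 19] is the threshold of [up_log_mul_le] for [c = 2 q^4]. *)
Lemma exp_le_num_privileged (T : finType) n : 1 < #|T| ->
  #|T| ^ (144 * #|T| ^ 4 + 19) <= n ->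
  exists2 l, #|T| ^ l <= n * n &
    #|T| ^ n <= 32 * #|T| ^ 23 * (l * l) * n * num_privileged T n.
Proof.
set q := #|T| => q_gt1 n_big.
have q4_gt0 : 0 < q ^ 4 by rewrite expn_gt0; lia.
have n_ge : 144 * q ^ 4 + 19 <= n := leq_trans (ltnW (ltn_expl _ q_gt1)) n_big.
set l := up_log q (2 * q ^ 4 * n); set k := up_log q (2 * q ^ 4 * l).
have l_lb : 2 * q ^ 4 * n <= q ^ l := up_logP _ q_gt1.
have l_ub : q ^ l <= q * (2 * q ^ 4 * n) by apply: expn_up_log_le; nia.
have l_gt : 144 * q ^ 4 + 19 < l.
  rewrite -(ltn_exp2l _ _ q_gt1); apply: leq_ltn_trans n_big (leq_trans _ l_lb).
  by rewrite -{1}[n]mul1n ltn_mul2r; lia.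
have l_small : 3 * l + 4 <= n by apply: up_log_mul_le; lia.
have k_small : 3 * k + 4 <= l by apply: up_log_mul_le; lia.
exists l.
  have q5_le_n : 2 * q ^ 5 <= n.
    apply: leq_trans n_big; apply: (@leq_trans (q ^ 6)).
      by rewrite (expnS q 5) leq_mul2r; lia.
    by apply: leq_pexp2l; lia.
  apply: leq_trans l_ub _; rewrite (expnS q 4) in q5_le_n.
  by rewrite mulnA mulnCA mulnA leq_mul2r -mulnA q5_le_n orbT.
apply: (@exp_le_num_privileged_params T k l n) => //.
- by rewrite up_log_gt0 q_gt1; nia.
- by rewrite up_logP // expn_up_log_le //; nia.
by rewrite l_lb.
Qed.

Lemma INR_expn (x e : nat) : INR (x ^ e) = (INR x ^ e)%R.
Proof. by elim: e => [|e IH] //; rewrite expnS mult_INR IH. Qed.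

Lemma INR_leq (x y : nat) : x <= y -> (INR x <= INR y)%R.
Proof. by move/leP; apply: le_INR. Qed.

Lemma ln_le (x y : R) : (0 < x)%R -> (x <= y)%R -> (ln x <= ln y)%R.
Proof.
move=> x_pos [lt_xy|<-]; last exact: Rle_refl.
by left; apply: ln_increasing.
Qed.

Lemma le_twice_log (q n l : nat) : 1 < q -> q ^ l <= n * n ->
  (INR l <= 2 * (ln (INR n) / ln (INR q)))%R.
Proof.
move=> q_gt1 le_l.
have q_gt1R : (1 < INR q)%R by apply: (lt_INR 1); apply/ltP.
have ln_q_pos : (0 < ln (INR q))%R by rewrite -ln_1; apply: ln_increasing; lra.
have n_pos : (0 < INR n)%R.
  apply: (lt_INR 0); apply/ltP; have : 0 < q ^ l by rewrite expn_gt0; lia.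
  by move: (q ^ l) le_l => Q; nia.
have := INR_leq le_l; rewrite INR_expn mult_INR.
move/(ln_le (pow_lt _ l (Rlt_trans _ _ _ Rlt_0_1 q_gt1R))).
rewrite ln_pow ?ln_mult; try lra.
move=> ln_le2; apply: (Rmult_le_reg_r (ln (INR q))) => //.
by rewrite Rmult_assoc /Rdiv Rmult_assoc Rinv_l ?Rmult_1_r; lra.
Qed.

Lemma lower_bound_of_expn_le (q n l D P : nat) : 1 < q -> q <= n -> 0 < D ->
  q ^ l <= n * n -> q ^ n <= D * (l * l) * n * P ->
  (/ (4 * INR D) * INR q ^ n / (INR n * (ln (INR n) / ln (INR q)) ^ 2) <= INR P)%R.
Proof.
move=> q_gt1 q_le_n D_pos le_l le_qn.
have l_le := le_twice_log q_gt1 le_l.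
set LL := (ln (INR n) / ln (INR q))%R in l_le *.
have q_gt1R : (1 < INR q)%R by apply: (lt_INR 1); apply/ltP.
have ln_q_pos : (0 < ln (INR q))%R by rewrite -ln_1; apply: ln_increasing; lra.
have LL_ge1 : (1 <= LL)%R.
  apply: (Rmult_le_reg_r (ln (INR q))) => //; rewrite /LL /Rdiv Rmult_assoc Rinv_l; last by lra.
  by rewrite !Rmult_1_l Rmult_1_r; apply: ln_le; [lra | apply: INR_leq].
have n_pos : (0 < INR n)%R by apply: (lt_INR 0); apply/ltP; lia.
have D_posR : (0 < INR D)%R by apply: (lt_INR 0); apply/ltP.
have P_nonneg := pos_INR P; have l_nonneg := pos_INR l.
have := INR_leq le_qn; rewrite INR_expn !mult_INR => le_qnR.
have LL2_pos : (0 < LL ^ 2)%R by apply: pow_lt; lra.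
have den_pos : (0 < 4 * INR D * (INR n * LL ^ 2))%R.
  by apply: Rmult_lt_0_compat; [lra | apply: Rmult_lt_0_compat].
apply: (Rmult_le_reg_r _ _ _ den_pos).
have -> : (/ (4 * INR D) * INR q ^ n / (INR n * LL ^ 2) * (4 * INR D * (INR n * LL ^ 2))
  = INR q ^ n)%R.
  by field; split; [|split]; apply: Rgt_not_eq; lra.
have l2_le : (INR l * INR l <= 4 * LL ^ 2)%R by rewrite /= Rmult_1_r; nra.
have DnP_nonneg : (0 <= INR D * INR n * INR P)%R by apply: Rmult_le_pos; nra.
have := Rmult_le_compat_l _ _ _ DnP_nonneg l2_le.
lra.
Qed.

Theorem theorem1 (q : nat) (hq : (2 <= q)%N) (T : finType) (hT : #|T| = q) :
  exists c : R, (0 < c)%R /\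
  exists n0 : nat, forall n : nat, (n0 <= n)%N ->
    (c * (INR q ^ n) / (INR n * (ln (INR n) / ln (INR q)) ^ 2)
       <= INR (num_privileged T n))%R.
Proof.
subst q; pose D := 32 * #|T| ^ 23.
have D_pos : 0 < D by rewrite muln_gt0 expn_gt0; lia.
exists (/ (4 * INR D))%R; split.
  by apply/Rinv_0_lt_compat/Rmult_lt_0_compat; [lra | apply: (lt_INR 0); apply/ltP].
exists (#|T| ^ (144 * #|T| ^ 4 + 19)) => n n_big.
have q_le_n : #|T| <= n.
  by apply: leq_trans n_big; rewrite -{1}(expn1 #|T|) leq_exp2l; lia.
have [l le_l le_qn] := exp_le_num_privileged hq n_big.
exact: lower_bound_of_expn_le le_l le_qn.
Qed.
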